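(* Let $\mathbf{L}$ be a lattice, $n\ge1$ an integer and $U$ an upset of $\mathbf{L}$. The following are equivalent: (i) for all $a_1,\dots,a_{n+1}\in U$ there are $i\neq j$ with $a_i\wedge a_j\in U$; (ii) $U$ is a union of at most $n$ filters of $\mathbf{L}$ (each contained in $U$); (iii) there is a lattice homomorphism $h\colon\mathbf{L}\to\mathbf{M}$ into some lattice $\mathbf{M}$ and an upset $V$ of $\mathbf{M}$ which is the upward closure of a set of at most $n$ elements, such that $U=h^{-1}[V]$.
   Context: A filter on a lattice is an upset closed under binary meets (the empty set and the whole lattice count as filters). *)

From mathcomp Require Import all_boot all_order.
Set Implicit Arguments. Unset Strict Implicit. Unset Printing Implicit Defensive.
Import Order.TTheory.
Local Open Scope order_scope.

Definition upset (d : Order.disp_t) (L : latticeType d) (U : L -> Prop) : Prop :=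
  forall x y : L, U x -> x <= y -> U y.

(* A filter: an upset closed under binary meets (empty set and whole lattice allowed). *)
Definition lfilter (d : Order.disp_t) (L : latticeType d) (F : L -> Prop) : Prop :=
  upset F /\ (forall x y : L, F x -> F y -> F (x `&` y)).

Definition lattice_hom (d d' : Order.disp_t) (L : latticeType d) (M : latticeType d')
  (h : L -> M) : Prop :=
  forall x y : L, h (x `&` y) = h x `&` h y /\ h (x `|` y) = h x `|` h y.

Definition upclosure (d : Order.disp_t) (M : latticeType d) (s : seq M) : M -> Prop :=
  fun y => exists2 b, b \in s & b <= y.

From HB Require Import structures.
From mathcomp Require Import all_boot all_order.
From mathcomp Require Import boolp.
Set Implicit Arguments. Unset Strict Implicit.
Import Order.TTheory.
Local Open Scope order_scope.

(* (i) => (ii): take a longest list s of elements of U whose pairwise meets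
   leave U. Maximality gives that every x in U meets some a in s inside U, and
   that each set {x | x /\ a in U} is closed under meets: otherwise a could be
   replaced by two such elements x /\ a and y /\ a, lengthening the list.
   (ii) => (iii): send L into its lattice of filters by x |-> up-set of x; the
   at most n filters covering U generate V.
   (iii) => (ii): the preimages of the principal filters of the generators.
   (ii) => (i): pigeonhole. *)

Section Filters.
Variables (d : Order.disp_t) (L : latticeType d).

Lemma principal_lfilter (x : L) : lfilter (fun y => x <= y).
Proof.
split=> [a b xa ab|a b xa xb]; first exact: le_trans ab.
by rewrite lexI xa.
Qed.

Lemma empty_lfilter : lfilter (fun _ : L => False).
Proof. by split. Qed.

Lemma lfilter_of_seq (n : nat) (T : eqType) (s : seq T) (f : T -> L -> Prop)
    (U : L -> Prop) :
  (size s <= n)%N -> (forall b, b \in s -> lfilter (f b)) ->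
  (forall x, U x <-> exists2 b, b \in s & f b x) ->
  exists F : 'I_n -> (L -> Prop),
    (forall k, lfilter (F k)) /\ (forall x, U x <-> exists k, F k x).
Proof.
move=> sn sF Us.
exists (fun k x => if onth s k is Some b then f b x else False); split.
  move=> k; case sk: onth => [b|]; last exact: empty_lfilter.
  by apply: sF; apply/onthP; exists k.
move=> x; rewrite Us; split=> [[b /onthP[i si] fbx]|[k]].
  have ilt : (i < n)%N by apply: leq_trans sn; rewrite -onthTE si.
  by exists (Ordinal ilt); rewrite /= si.
by case si: onth => [b|//] fbx; exists b => //; apply/onthP; exists k.
Qed.

End Filters.

(* Filters are ordered by reverse inclusion, so that x |-> up-set of x is a
   lattice homomorphism. *)
Record lfilt (d : Order.disp_t) (L : latticeType d) :=
  LFilt { lfilt_pred : L -> Prop; lfilt_filter : lfilter lfilt_pred }.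

HB.instance Definition _ d L := gen_eqMixin (@lfilt d L).
HB.instance Definition _ d L := gen_choiceMixin (@lfilt d L).

Section FilterLattice.
Variables (d : Order.disp_t) (L : latticeType d).
Implicit Types F G H : lfilt L.

Lemma lfilt_ext F G : (forall x, lfilt_pred F x <-> lfilt_pred G x) -> F = G.
Proof.
case: F G => [f fF] [g gF] /= efg.
have efg' : f = g by apply: funext => x; apply: propext.
by subst g; congr LFilt; apply: Prop_irrelevance.
Qed.

Definition lfilt_le F G := `[< forall x, lfilt_pred G x -> lfilt_pred F x >].

Lemma lfilt_le_refl : reflexive lfilt_le.
Proof. by move=> F; apply/asboolP. Qed.

Lemma lfilt_le_anti : antisymmetric lfilt_le.
Proof.
by move=> F G /andP[/asboolP GF /asboolP FG]; apply: lfilt_ext => x; split; auto.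
Qed.

Lemma lfilt_le_trans : transitive lfilt_le.
Proof. by move=> G F H /asboolP GF /asboolP HG; apply/asboolP; auto. Qed.

Definition lfilt_display : Order.disp_t. Proof. exact: Order.Disp tt tt. Qed.

HB.instance Definition _ := Order.Le_isPOrder.Build lfilt_display (lfilt L)
  lfilt_le_refl lfilt_le_anti lfilt_le_trans.

(* The filter generated by F u G; the last two disjuncts are needed because
   F or G may be empty. *)
Definition generated_pred F G (x : L) : Prop :=
  (exists a b, [/\ lfilt_pred F a, lfilt_pred G b & a `&` b <= x])
  \/ lfilt_pred F x \/ lfilt_pred G x.

Lemma generated_lfilter F G : lfilter (generated_pred F G).
Proof.
case: F G => [f [fu fm]] [g [gu gm]]; rewrite /generated_pred /=; split.
  move=> x y [[a [b [fa gb ab]]]|[fx|gx]] xy.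
  - by left; exists a, b; split=> //; apply: le_trans xy.
  - by right; left; apply: fu xy.
  - by right; right; apply: gu xy.
move=> x y [[a [b [fa gb ab]]]|[fx|gx]] [[a' [b' [fa' gb' ab']]]|[fy|gy]].
- left; exists (a `&` a'), (b `&` b'); split; [exact: fm|exact: gm|].
  by rewrite meetACA; apply: leI2.
- left; exists (a `&` y), b; split; [exact: fm|exact: gb|].
  by rewrite meetAC; apply: leI2.
- left; exists a, (b `&` y); split; [exact: fa|exact: gm|].
  by rewrite meetA; apply: leI2.
- left; exists (x `&` a'), b'; split; [exact: fm|exact: gb'|].
  by rewrite -meetA; apply: leI2.
- by right; left; apply: fm.
- by left; exists x, y; split.
- left; exists a', (x `&` b'); split; [exact: fa'|exact: gm|].
  by rewrite meetCA; apply: leI2.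
- by left; exists y, x; split=> //; rewrite meetC.
- by right; right; apply: gm.
Qed.

Lemma intersection_lfilter F G :
  lfilter (fun x => lfilt_pred F x /\ lfilt_pred G x).
Proof.
case: F G => [f [fu fm]] [g [gu gm]] /=; split.
  by move=> x y [fx gx] xy; split; [apply: fu xy|apply: gu xy].
by move=> x y [fx gx] [fy gy]; split; [apply: fm|apply: gm].
Qed.

Definition lfilt_meet F G := LFilt (generated_lfilter F G).
Definition lfilt_join F G := LFilt (intersection_lfilter F G).

Lemma lfilt_lexI F G H : (F <= lfilt_meet G H) = (F <= G) && (F <= H).
Proof.
apply/idP/andP=> [/asboolP FGH|[/asboolP FG /asboolP FH]].
  by split; apply/asboolP => x hx; apply: FGH; rewrite /= /generated_pred; auto.
apply/asboolP => x.
case: F FG FH => [f [fu fm]] /= FG FH [[a [b [ga hb ab]]]|[gx|hx]]; auto.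
by apply: fu ab; apply: fm; auto.
Qed.

Lemma lfilt_leUx F G H : (lfilt_join F G <= H) = (F <= H) && (G <= H).
Proof.
apply/idP/andP=> [/asboolP FGH|[/asboolP FH /asboolP GH]].
  by split; apply/asboolP => x /FGH[].
by apply/asboolP => x hx; split; auto.
Qed.

HB.instance Definition _ :=
  Order.POrder_MeetJoin_isLattice.Build lfilt_display (lfilt L)
    lfilt_lexI lfilt_leUx.

Definition principal_lfilt (x : L) : lfilt L := LFilt (principal_lfilter x).

Lemma principal_lfilt_hom : lattice_hom principal_lfilt.
Proof.
move=> x y; split; apply: lfilt_ext => z /=; last by rewrite leUx; split=> /andP.
rewrite /generated_pred /=; split=> [xyz|]; first by left; exists x, y.
move=> [[a [b [xa yb ab]]]|[xz|yz]].
- by apply: le_trans ab; apply: leI2.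
- by apply: le_trans xz; apply: leIl.
- by apply: le_trans yz; apply: leIr.
Qed.

Lemma le_principal_lfilt (F : lfilt L) x :
  (F <= principal_lfilt x) <-> lfilt_pred F x.
Proof.
split=> [/asboolP Fx|Fx]; first exact: Fx x (lexx x).
by apply/asboolP => y /= xy; case: F Fx => f [fu _] /= fx; apply: fu xy.
Qed.

End FilterLattice.

Lemma lattice_hom_homo (d d' : Order.disp_t) (L : latticeType d)
    (M : latticeType d') (h : L -> M) :
  lattice_hom h -> {homo h : x y / x <= y}.
Proof. by move=> hh x y /meet_idPl <-; have [-> _] := hh x y; apply: leIr. Qed.

Section MeetIndependent.
Variables (d : Order.disp_t) (L : latticeType d) (U : L -> Prop).
Hypothesis hU : upset U.

Definition meet_independent (s : seq L) :=
  [/\ uniq s, {in s, forall x, U x} & {in s &, forall x y, U (x `&` y) -> x = y}].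

Lemma meet_independent_size n (t : seq L) :
  (forall a : 'I_n.+1 -> L, (forall i, U (a i)) ->
     exists i j : 'I_n.+1, i != j /\ U (a i `&` a j)) ->
  meet_independent t -> (size t <= n)%N.
Proof.
move=> P1 [ut Ut pt]; rewrite leqNgt; apply/negP => nt.
case: t nt ut Ut pt => [//|x0 t'] nt ut Ut pt; set t := x0 :: t' in nt ut Ut pt.
have ti (i : 'I_n.+1) : (i < size t)%N by apply: leq_trans nt.
have [i [j [/negP ij Uij]]] := P1 (nth x0 t) (fun i => Ut _ (mem_nth _ (ti i))).
apply: ij; apply/eqP/val_eqP; rewrite /= -(nth_uniq x0 (ti i) (ti j) ut).
by apply/eqP; apply: pt Uij; apply: mem_nth.
Qed.

Lemma exists_longest_meet_independent n :
  (forall t, meet_independent t -> (size t <= n)%N) ->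
  exists2 s, meet_independent s &
    forall t, meet_independent t -> (size t <= size s)%N.
Proof.
move=> bound.
pose P k := `[< exists2 t, meet_independent t & size t = k >].
have P0 : exists k, P k by exists 0%N; apply/asboolP; exists [::].
have Pn k : P k -> (k <= n)%N by move/asboolP=> [t /bound + <-].
case: (ex_maxnP P0 Pn) => _ /asboolP[s s_indep <-] smax.
by exists s => // t it; apply: smax; apply/asboolP; exists t.
Qed.

Lemma meet_independent_cons s x :
  meet_independent s -> U x -> (forall a, a \in s -> ~ U (x `&` a)) ->
  meet_independent (x :: s).
Proof.
move=> [us Us ps] Ux xs.
have xns : x \notin s by apply/negP => /xs; rewrite meetxx.
split=> [|y|y z]; first by rewrite /= xns us.
  by rewrite in_cons => /orP[/eqP->|/Us].
rewrite !in_cons => /orP[/eqP->|ys] /orP[/eqP->|zs] //.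
- by move/xs.
- by rewrite meetC => /xs.
- exact: ps.
Qed.

Lemma meet_independent_split s a p q :
  meet_independent s -> a \in s -> p <= a -> q <= a -> U p -> U q ->
  ~ U (p `&` q) -> meet_independent [:: p, q & rem a s].
Proof.
move=> [us Us ps] sa pa qa Up Uq npq.
have remP b : b \in rem a s -> b \in s /\ b != a.
  by rewrite (mem_rem_uniq _ us) inE => /andP[].
have below c b : c <= a -> b \in rem a s -> ~ U (c `&` b).
  move=> ca /remP[sb /negP ba] Ucb; apply: ba; apply/eqP/esym.
  by apply: ps => //; apply: hU Ucb (leI2 ca (lexx b)).
have notin c : c <= a -> U c -> c \notin rem a s.
  by move=> ca Uc; apply/negP => /(below c c ca); rewrite meetxx.
have pq : p != q by apply/negP => /eqP pq; apply: npq; rewrite -pq meetxx.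
split=> [|z|u v]; first by rewrite /= in_cons negb_or pq !notin ?rem_uniq.
  by rewrite !in_cons => /orP[/eqP->//|/orP[/eqP->//|/remP[/Us]]].
rewrite !in_cons => /orP[/eqP->|/orP[/eqP->|ur]] /orP[/eqP->|/orP[/eqP->|vr]] //.
- by move/(below _ _ pa vr).
- by rewrite meetC.
- by move/(below _ _ qa vr).
- by rewrite meetC => /(below _ _ pa ur).
- by rewrite meetC => /(below _ _ qa ur).
- by have [su _] := remP _ ur; have [sv _] := remP _ vr; apply: ps.
Qed.

Variable s : seq L.
Hypotheses (s_indep : meet_independent s)
  (s_longest : forall t, meet_independent t -> (size t <= size s)%N).

Lemma longest_meet_independent_cover x :
  U x -> exists2 a, a \in s & U (x `&` a).
Proof.
move=> Ux; apply: contrapT => nx.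
have xs a : a \in s -> ~ U (x `&` a) by move=> sa Uxa; apply: nx; exists a.
by have := s_longest (meet_independent_cons s_indep Ux xs); rewrite /= ltnn.
Qed.

Lemma longest_meet_independent_lfilter a :
  a \in s -> lfilter (fun x => U (x `&` a)).
Proof.
move=> sa; split=> [x y Ux xy|x y Ux Uy]; first exact: hU Ux (leI2 xy (lexx a)).
apply: contrapT => nxy.
have npq : ~ U ((x `&` a) `&` (y `&` a)) by rewrite meetACA meetxx.
have := s_longest (meet_independent_split s_indep sa (leIr _ _) (leIr _ _) Ux Uy npq).
have s_gt0 : (0 < size s)%N by case: (s) sa.
by rewrite /= size_rem // prednK // ltnn.
Qed.

End MeetIndependent.

Section Equivalences.
Variables (d : Order.disp_t) (L : latticeType d) (n : nat) (U : L -> Prop).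

Definition pairwise_meet_in :=
  forall a : 'I_n.+1 -> L, (forall i, U (a i)) ->
    exists i j : 'I_n.+1, i != j /\ U (a i `&` a j).

Definition union_of_lfilters :=
  exists F : 'I_n -> (L -> Prop),
    (forall k, lfilter (F k)) /\ (forall x, U x <-> exists k, F k x).

Definition hom_preimage_upclosure :=
  exists (d' : Order.disp_t) (M : latticeType d') (h : L -> M),
    lattice_hom h /\
    exists s : seq M, (size s <= n)%N /\ (forall x, U x <-> upclosure s (h x)).

Lemma union_of_lfilters_pairwise_meet_in :
  union_of_lfilters -> pairwise_meet_in.
Proof.
move=> [F [hF UF]] a Ua.
have /all_sig[g gP] i : {k | F k (a i)} by apply/cid/UF.
have /injectivePn[i [j ij gij]] : ~~ injectiveb g.
  by apply/injectiveP => /leq_card; rewrite !card_ord ltnn.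
exists i, j; split=> //; apply/UF; exists (g i).
by have [_ Fm] := hF (g i); apply: Fm; last rewrite gij.
Qed.

Lemma pairwise_meet_in_union_of_lfilters :
  upset U -> pairwise_meet_in -> union_of_lfilters.
Proof.
move=> hU P1; have bound := meet_independent_size P1.
have [s s_indep s_longest] := exists_longest_meet_independent bound.
apply: (lfilter_of_seq (f := fun a x => U (x `&` a)) (bound _ s_indep)).
  by move=> a; apply: longest_meet_independent_lfilter.
move=> x; split; first exact: longest_meet_independent_cover s_indep s_longest x.
by move=> [a _ Uxa]; apply: hU Uxa (leIl _ _).
Qed.

Lemma union_of_lfilters_hom_preimage :
  union_of_lfilters -> hom_preimage_upclosure.
Proof.
move=> [F [hF UF]].
exists lfilt_display, (lfilt L), (@principal_lfilt _ L).
split; first exact: principal_lfilt_hom.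
exists [seq LFilt (hF k) | k <- enum 'I_n].
split; first by rewrite size_map size_enum_ord.
move=> x; rewrite UF; split=> [[k Fkx]|[_ /mapP[k _ ->] /le_principal_lfilt]].
  by exists (LFilt (hF k)); [apply: map_f; rewrite mem_enum|apply/le_principal_lfilt].
by exists k.
Qed.

Lemma hom_preimage_union_of_lfilters :
  hom_preimage_upclosure -> union_of_lfilters.
Proof.
move=> [d' [M [h [hh [s [sn Us]]]]]].
apply: (lfilter_of_seq (f := fun b x => b <= h x) sn) => // b _; split.
  by move=> x y bx /(lattice_hom_homo hh); apply: le_trans.
by move=> x y bx b_y; have [-> _] := hh x y; rewrite lexI bx.
Qed.

End Equivalences.

Theorem mainTheorem4 (d : Order.disp_t) (L : latticeType d) (n : nat) (hn : (1 <= n)%N)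
  (U : L -> Prop) (hU : upset U) :
  let P1 := forall a : 'I_n.+1 -> L, (forall i, U (a i)) ->
              exists i j : 'I_n.+1, i != j /\ U (a i `&` a j) in
  let P2 := exists F : 'I_n -> (L -> Prop),
              (forall k, lfilter (F k)) /\ (forall x, U x <-> exists k, F k x) in
  let P3 := exists (d' : Order.disp_t) (M : latticeType d') (h : L -> M),
              lattice_hom h /\
              exists s : seq M, (size s <= n)%N /\
                (forall x, U x <-> upclosure s (h x)) in
  (P1 <-> P2) /\ (P2 <-> P3).
Proof.
split; split.
- exact: pairwise_meet_in_union_of_lfilters.
- exact: union_of_lfilters_pairwise_meet_in.
- exact: union_of_lfilters_hom_preimage.
- exact: hom_preimage_union_of_lfilters.
Qed.
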